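(* There exists an absolute constant $C>0$ such that the following holds. Let $\mathcal J$ be a joint distribution of $(p_1,p_2,y)\in[0,1]\times[0,1]\times\{0,1\}$, let $\mathcal D_1$ be the distribution of $(p_1,y)$ and $\mathcal D_2$ the distribution of $(p_2,y)$. Then $$|\mathsf{SCDL}(\mathcal D_1)^2-\mathsf{SCDL}(\mathcal D_2)^2|\le C\,\mathbb E_{\mathcal J}|p_1-p_2|\quad\text{and}\quad |\mathsf{SCDL}(\mathcal D_1)-\mathsf{SCDL}(\mathcal D_2)|\le C\sqrt{\mathbb E_{\mathcal J}|p_1-p_2|}.$$
   Context: For $x\in\mathbb R$ write $x_+=\max\{x,0\}$. For a distribution $\mathcal D$ of $(p,y)\in[0,1]\times\{0,1\}$, a positive integer $m$ and $i\in\{0,\ldots,m\}$, let $w_i(p)=(1-|mp-i|)_+$, $\pi_i=\mathbb E_{\mathcal D}[w_i(p)]$ and $q_i=\mathbb E_{\mathcal D}[w_i(p)y]/\pi_i$ (terms with $\pi_i=0$ are $0$). These are the bin weights and bin conditional means after randomly rounding $p$ to a neighbouring multiple $p'$ of $1/m$ with $\Pr[p'=i/m\mid p]=w_i(p)$. Define $$\mathsf{SCDL}_m(\mathcal D)=\max_{i=0,\ldots,m}\Big(\sum_{j=0}^{i}\pi_j\big(q_j-\tfrac{i+1}{m}\big)_+ +\sum_{j=i+1}^{m}\pi_j\big(\tfrac im-q_j\big)_+\Big),\quad \mathsf{SCDL}(\mathcal D)=\inf_{m\in\{2^1,2^2,\ldots\}}\max\{\mathsf{SCDL}_m(\mathcal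 D),1/m\}.$$ *)

From HB Require Import structures.
From mathcomp Require Import all_boot all_order all_algebra.
From mathcomp Require Import all_classical all_reals all_analysis.
Set Implicit Arguments. Unset Strict Implicit. Unset Printing Implicit Defensive.
Import Order.TTheory GRing.Theory Num.Theory.
Local Open Scope classical_set_scope.
Local Open Scope ring_scope.

Section SCDL.
Context {R : realType} {d : measure_display} {Omega : measurableType d}.
Variable P : probability Omega R.

Definition posp (x : R) : R := Num.max x 0.

Definition wbin (m i : nat) (p : R) : R := posp (1 - `|m%:R * p - i%:R|).

(* the distribution D of (p, y) is the law of the random pair (p, y) on P;
   expectations E_D[f(p,y)] are integrals w.r.t. P *)
Definition pi_bin (p : Omega -> R) (m i : nat) : R :=
  Rintegral P setT (fun x => wbin m i (p x)).

Definition q_bin (p y : Omega -> R) (m i : nat) : R :=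
  if pi_bin p m i == 0 then 0
  else Rintegral P setT (fun x => wbin m i (p x) * y x) / pi_bin p m i.

Definition SCDL_m (p y : Omega -> R) (m : nat) : R :=
  \big[Num.max/0]_(i < m.+1)
    (\sum_(j < i.+1) pi_bin p m j * posp (q_bin p y m j - i.+1%:R / m%:R)
     + \sum_(i.+1 <= j < m.+1) pi_bin p m j * posp (i%:R / m%:R - q_bin p y m j)).

Definition SCDL (p y : Omega -> R) : R :=
  inf (range (fun k : nat =>
    Num.max (SCDL_m p y (2 ^ k.+1)%N) ((2 ^ k.+1)%N%:R)^-1)).

End SCDL.

(* Write the bin terms with the unnormalised means [alpha_j = pi_j q_j]:
   [pi_j (q_j - t)_+ = (alpha_j - t pi_j)_+] is 1-Lipschitz in [alpha_j] and
   t-Lipschitz in [pi_j], and [sum_j |w_j(p1) - w_j(p2)| <= 4 m |p1 - p2|]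
   because every point meets at most two tents; hence
   [SCDL_m(D1) <= SCDL_m(D2) + 24 m E].  A tent of the grid [1/m] is
   [w_(2j) + (w_(2j-1) + w_(2j+1))/2] in the grid [1/(2m)], so subadditivity
   of [(.)_+] gives [SCDL_m <= SCDL_(2m)]: on a coarse dyadic grid [SCDL_m]
   is at most its value on any finer one, e.g. a near-optimal grid for [D2].
   Taking a grid of size [m] between [1/t] and [2/t] yields
   [SCDL(D1) <= t + 48 E / t] for every [t >= SCDL(D2)], and
   [t = max (SCDL(D2), sqrt E)] gives [SCDL(D1)^2 <= SCDL(D2)^2 + 49^2 E].
   Exchanging [p1] and [p2] proves both bounds with [C = 49^2]. *)

From HB Require Import structures.
From mathcomp Require Import all_boot all_order all_algebra.
From mathcomp Require Import all_classical all_reals all_analysis.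
From mathcomp Require Import measurable_realfun.
From mathcomp Require Import ring lra zify.
Import Order.TTheory GRing.Theory Num.Theory.
Local Open Scope classical_set_scope.
Local Open Scope ring_scope.

Section PositivePart.
Context {R : realType}.
Implicit Types x y c : R.

Lemma posp_cases x : (0 <= x /\ posp x = x) \/ (x <= 0 /\ posp x = 0).
Proof.
rewrite /posp; have [h|h] := lerP 0 x; first by left.
by right; split => //; exact: ltW.
Qed.

Lemma posp_ge0 x : 0 <= posp x.
Proof. by case: (posp_cases x) => -[h ->]. Qed.

Lemma ger0_posp x : 0 <= x -> posp x = x.
Proof. by case: (posp_cases x) => -[h ->] //; lra. Qed.

Lemma ler0_posp x : x <= 0 -> posp x = 0.
Proof. by case: (posp_cases x) => -[h ->] //; lra. Qed.

Lemma le_posp x y : x <= y -> posp x <= posp y.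
Proof.
by move=> h; case: (posp_cases x) => -[h1 ->]; case: (posp_cases y) => -[h2 ->]; lra.
Qed.

Lemma pospD_le x y : posp (x + y) <= posp x + posp y.
Proof.
by case: (posp_cases x) => -[h1 ->]; case: (posp_cases y) => -[h2 ->];
  case: (posp_cases (x + y)) => -[h3 ->]; lra.
Qed.

Lemma pospMl c x : 0 <= c -> posp (c * x) = c * posp x.
Proof.
by move=> c0; case: (posp_cases x) => -[h1 ->];
  case: (posp_cases (c * x)) => -[h2 ->]; nra.
Qed.

Lemma posp_mix_le x y z : posp (x + y / 2 + z / 2) <= posp x + posp y / 2 + posp z / 2.
Proof.
have := pospD_le (x + y / 2) (z / 2); have := pospD_le x (y / 2).
by rewrite ![_ / 2]mulrC !pospMl ?invr_ge0 //; lra.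
Qed.

Lemma posp_leD_dist x y : posp x <= posp y + `|x - y|.
Proof.
have := ler_norm (x - y); have := ler_norm (y - x); rewrite distrC.
by case: (posp_cases x) => -[h1 ->]; case: (posp_cases y) => -[h2 ->]; lra.
Qed.

End PositivePart.

Ltac rewrite_signs :=
  repeat match goal with |- context [`|?x|] =>
    first [ rewrite (@ger0_norm _ x); last lra
          | rewrite (@ler0_norm _ x); last lra ] end;
  repeat match goal with |- context [posp ?x] =>
    first [ rewrite (@ger0_posp _ x); last lra
          | rewrite (@ler0_posp _ x); last lra ] end.

Section Tent.
Context {R : realType}.
Implicit Types u v : R.

Definition tent u : R := posp (1 - `|u|).

Lemma wbinE m i (p : R) : wbin m i p = tent (m%:R * p - i%:R).
Proof. by []. Qed.

Lemma tent_le1 u : tent u <= 1.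
Proof. by rewrite /tent; case: (posp_cases (1 - `|u|)) => -[h ->] //; lra. Qed.

Lemma tent_eq0 u : 1 <= `|u| -> tent u = 0.
Proof. by move=> h; rewrite /tent ler0_posp //; lra. Qed.

Lemma tent_lipschitz u v : `|tent u - tent v| <= `|u - v|.
Proof.
have := ler_dist_dist u v.
have := posp_leD_dist (1 - `|u|) (1 - `|v|).
have := posp_leD_dist (1 - `|v|) (1 - `|u|).
have -> : 1 - `|v| - (1 - `|u|) = `|u| - `|v| by ring.
have -> : 1 - `|u| - (1 - `|v|) = - (`|u| - `|v|) by ring.
rewrite normrN /tent => h1 h2 h3.
by rewrite ler_norml; apply/andP; split; lra.
Qed.

(* With [v = 2m p - 2j] this is [w^m_j = w^(2m)_(2j) + (w^(2m)_(2j-1) + w^(2m)_(2j+1)) / 2]. *)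
Lemma tent_half v : tent (v / 2) = tent v + tent (v + 1) / 2 + tent (v - 1) / 2.
Proof.
rewrite /tent.
have [h|h] := lerP v (-2); first by rewrite_signs; lra.
have [h'|h'] := lerP v (-1); first by rewrite_signs; lra.
have [h0|h0] := lerP v 0; first by rewrite_signs; lra.
have [h1|h1] := lerP v 1; first by rewrite_signs; lra.
have [h2|h2] := lerP v 2; first by rewrite_signs; lra.
by rewrite_signs; lra.
Qed.

End Tent.

Section BinnedSCDL.
Context {R : realType}.
Implicit Types (a b t : R) (pi al : nat -> R).

(* With [a = pi_j * q_j] and [b = pi_j], [excess a b t = pi_j (q_j - t)_+]
   and [shortfall a b t = pi_j (t - q_j)_+]. *)
Definition excess a b t : R := posp (a - t * b).
Definition shortfall a b t : R := posp (t * b - a).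

Definition scdl_term pi al (m i : nat) : R :=
  \sum_(0 <= j < i.+1) excess (al j) (pi j) (i.+1%:R / m%:R)
  + \sum_(i.+1 <= j < m.+1) shortfall (al j) (pi j) (i%:R / m%:R).

Definition scdl_bins pi al (m : nat) : R :=
  \big[Num.max/0]_(i < m.+1) scdl_term pi al m i.

Lemma scdl_term_ge0 pi al m i : 0 <= scdl_term pi al m i.
Proof. by apply: addr_ge0; apply: sumr_ge0 => j _; apply: posp_ge0. Qed.

Lemma scdl_bins_ge0 pi al m : 0 <= scdl_bins pi al m.
Proof.
rewrite /scdl_bins; elim/big_ind: _ => // [x y hx hy|i _].
  by rewrite le_max hx.
exact: scdl_term_ge0.
Qed.

Lemma scdl_bins_le pi al m X : 0 <= X ->
  (forall i, (i <= m)%N -> scdl_term pi al m i <= X) -> scdl_bins pi al m <= X.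
Proof.
move=> X0 h; rewrite /scdl_bins; elim/big_ind: _ => // [x y hx hy|i _].
  by rewrite ge_max hx hy.
by apply: h; rewrite -ltnS.
Qed.

Lemma scdl_term_le_bins pi al m i : (i <= m)%N ->
  scdl_term pi al m i <= scdl_bins pi al m.
Proof.
move=> im; rewrite /scdl_bins (bigD1 (Ordinal (im : (i < m.+1)%N))) //=.
by rewrite le_max lexx.
Qed.

Lemma threshold_bounds (i m : nat) : (0 < m)%N -> (i <= m)%N ->
  [/\ 0 <= i.+1%:R / m%:R :> R, i.+1%:R / m%:R <= 2 :> R,
      0 <= i%:R / m%:R :> R & i%:R / m%:R <= 1 :> R].
Proof.
move=> m0 im.
have mR : (0 : R) < m%:R by rewrite ltr0n.
have imR : (i%:R : R) <= m%:R by rewrite ler_nat.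
have m1 : (1 : R) <= m%:R by rewrite ler1n.
split; [exact: divr_ge0| |exact: divr_ge0|].
  by rewrite ler_pdivrMr // -natr1; lra.
by rewrite ler_pdivrMr //; lra.
Qed.

Lemma excess_lipschitz a b a' b' t : 0 <= t ->
  excess a b t <= excess a' b' t + (`|a - a'| + t * `|b - b'|).
Proof.
move=> t0; apply: le_trans (posp_leD_dist _ (a' - t * b')) _; rewrite lerD2l.
have -> : a - t * b - (a' - t * b') = (a - a') - t * (b - b') by ring.
by apply: le_trans (ler_normB _ _) _; rewrite normrM ger0_norm.
Qed.

Lemma shortfall_lipschitz a b a' b' t : 0 <= t ->
  shortfall a b t <= shortfall a' b' t + (`|a - a'| + t * `|b - b'|).
Proof.
move=> t0; apply: le_trans (posp_leD_dist _ (t * b' - a')) _; rewrite lerD2l.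
have -> : t * b - a - (t * b' - a') = t * (b - b') - (a - a') by ring.
by apply: le_trans (ler_normB _ _) _; rewrite addrC normrM ger0_norm.
Qed.

Lemma sum_nat_le_full (c : nat -> R) lo hi n : (forall j, 0 <= c j) ->
  (lo <= hi <= n)%N -> \sum_(lo <= j < hi) c j <= \sum_(0 <= j < n) c j.
Proof.
move=> c0 /andP[lohi hin].
rewrite (@big_cat_nat _ _ _ lo 0 n) ?(leq_trans lohi) //=.
rewrite (@big_cat_nat _ _ _ hi lo n) //=.
have : 0 <= \sum_(0 <= j < lo) c j by apply: sumr_ge0.
have : 0 <= \sum_(hi <= j < n) c j by apply: sumr_ge0.
lra.
Qed.

Lemma scdl_bins_lipschitz pi al pi' al' m : (0 < m)%N ->
  scdl_bins pi al m <= scdl_bins pi' al' m +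
    2 * \sum_(0 <= j < m.+1) (`|al j - al' j| + 2 * `|pi j - pi' j|).
Proof.
move=> m0; pose d j : R := `|al j - al' j| + 2 * `|pi j - pi' j|.
have d0 j : 0 <= d j by rewrite addr_ge0 // mulr_ge0.
have dsum0 : 0 <= \sum_(0 <= j < m.+1) d j by apply: sumr_ge0.
apply: scdl_bins_le => [|i im]; first by rewrite addr_ge0 ?scdl_bins_ge0 ?mulr_ge0.
suff : scdl_term pi al m i <= scdl_term pi' al' m i + 2 * \sum_(0 <= j < m.+1) d j.
  by move/le_trans; apply; rewrite lerD2r scdl_term_le_bins.
have [T0 T2 t0 t1] := threshold_bounds _ _ m0 im.
have excess_le j : excess (al j) (pi j) (i.+1%:R / m%:R) <=
    excess (al' j) (pi' j) (i.+1%:R / m%:R) + d j.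
  apply: le_trans (excess_lipschitz _ _ (al' j) (pi' j) _ T0) _.
  by rewrite /d lerD2l lerD2l ler_wpM2r.
have shortfall_le j : shortfall (al j) (pi j) (i%:R / m%:R) <=
    shortfall (al' j) (pi' j) (i%:R / m%:R) + d j.
  apply: le_trans (shortfall_lipschitz _ _ (al' j) (pi' j) _ t0) _.
  by rewrite /d lerD2l lerD2l ler_wpM2r //; lra.
rewrite /scdl_term mulr2n mulrDl mul1r addrACA; apply: lerD.
  apply: le_trans (ler_sum_nat (fun j _ => excess_le j)) _.
  rewrite big_split lerD2l /=.
  by apply: sum_nat_le_full => //; lia.
apply: le_trans (ler_sum_nat (fun j _ => shortfall_le j)) _.
by rewrite big_split lerD2l /=; apply: sum_nat_le_full => //; lia.
Qed.

Lemma scdl_bins_le1 pi al m : (0 < m)%N -> (forall j, 0 <= al j <= pi j) ->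
  \sum_(0 <= j < m.+1) pi j <= 1 -> scdl_bins pi al m <= 1.
Proof.
move=> m0 alpi pi1; apply: scdl_bins_le => // i im.
have [T0 _ t0 t1] := threshold_bounds _ _ m0 im.
apply: le_trans pi1; rewrite (@big_cat_nat _ _ _ i.+1) //=.
apply: lerD; apply: ler_sum_nat => j _; have /andP[al0 alpij] := alpi j.
  by rewrite /excess; case: (posp_cases (al j - i.+1%:R / m%:R * pi j)) => -[h ->]; nra.
by rewrite /shortfall; case: (posp_cases (i%:R / m%:R * pi j - al j)) => -[h ->]; nra.
Qed.

End BinnedSCDL.

Section Refinement.
Context {R : realType}.
Implicit Types (a b t : R) (pi al X : nat -> R).

Lemma excess_mix_le a0 a1 a2 b0 b1 b2 t :
  excess (a0 + a1 / 2 + a2 / 2) (b0 + b1 / 2 + b2 / 2) t <=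
  excess a0 b0 t + excess a1 b1 t / 2 + excess a2 b2 t / 2.
Proof.
by rewrite /excess; apply: le_trans (posp_mix_le _ _ _); apply: le_posp; lra.
Qed.

Lemma shortfall_mix_le a0 a1 a2 b0 b1 b2 t :
  shortfall (a0 + a1 / 2 + a2 / 2) (b0 + b1 / 2 + b2 / 2) t <=
  shortfall a0 b0 t + shortfall a1 b1 t / 2 + shortfall a2 b2 t / 2.
Proof.
by rewrite /shortfall; apply: le_trans (posp_mix_le _ _ _); apply: le_posp; lra.
Qed.

Lemma excess_antitone a b t t' : 0 <= b -> t <= t' -> excess a b t' <= excess a b t.
Proof. by move=> b0 tt'; apply: le_posp; nra. Qed.

Lemma shortfall_monotone a b t t' : 0 <= b -> t <= t' ->
  shortfall a b t <= shortfall a b t'.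
Proof. by move=> b0 tt'; apply: le_posp; nra. Qed.

Lemma excess00 t : excess 0 0 t = 0.
Proof. by rewrite /excess mulr0 subr0 ger0_posp. Qed.

Lemma shortfall00 t : shortfall 0 0 t = 0.
Proof. by rewrite /shortfall mulr0 subr0 ger0_posp. Qed.

(* [left_odd X j] is [X (2j - 1)], with [0] in place of the missing [X (-1)]. *)
Definition left_odd X (j : nat) : R := if j is j'.+1 then X j'.*2.+1 else 0.

Lemma sum_refine X lo hi : (lo <= hi)%N ->
  \sum_(lo <= j < hi) (X j.*2 + X j.*2.+1 / 2 + left_odd X j / 2) =
  \sum_(lo.*2 <= k < hi.*2) X k + (left_odd X lo - left_odd X hi) / 2.
Proof.
move=> /subnKC <-; elim: (hi - lo)%N => [|n IH].
  by rewrite addn0 !big_geq // subrr mul0r addr0.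
rewrite addnS big_nat_recr ?leq_addr //= IH doubleS.
rewrite big_nat_recr /=; last by rewrite -addnn; lia.
rewrite big_nat_recr /=; last by rewrite -!addnn; lia.
by rewrite /=; lra.
Qed.

Lemma sum_nat_recr0 (F : nat -> R) lo n : F n = 0 ->
  \sum_(lo <= k < n.+1) F k = \sum_(lo <= k < n) F k.
Proof.
move=> F0; have [lon|nlo] := leqP lo n; first by rewrite big_nat_recr //= F0 addr0.
by rewrite !big_geq //; lia.
Qed.

Lemma scdl_bins_ge_thresholds pi al n i T t : (forall k, 0 <= pi k) ->
  (i <= n)%N -> i.+1%:R / n%:R <= T -> t <= i%:R / n%:R ->
  \sum_(0 <= j < i.+1) excess (al j) (pi j) T
  + \sum_(i.+1 <= j < n.+1) shortfall (al j) (pi j) t <= scdl_bins pi al n.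
Proof.
move=> pi0 ni hT ht; apply: le_trans _ (scdl_term_le_bins pi al n i ni); apply: lerD.
  by apply: ler_sum_nat => j _; apply: excess_antitone.
by apply: ler_sum_nat => j _; apply: shortfall_monotone.
Qed.

Lemma scdl_bins_ge_thresholds_ext pi al n i T t : (forall k, 0 <= pi k) ->
  pi n.+1 = 0 -> al n.+1 = 0 ->
  (i <= n.+1)%N -> i.+1%:R / n%:R <= T -> t <= i%:R / n%:R ->
  \sum_(0 <= j < i.+1) excess (al j) (pi j) T
  + \sum_(i.+1 <= j < n.+2) shortfall (al j) (pi j) t <= scdl_bins pi al n.
Proof.
move=> pi0 pitop altop.
rewrite (@sum_nat_recr0 _ i.+1 n.+1) ?pitop ?altop ?shortfall00 //.
rewrite leq_eqVlt ltnS => /orP[/eqP->|ni] hT ht; last first.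
  exact: scdl_bins_ge_thresholds.
rewrite (big_nat_recr n.+1) //= pitop altop excess00 addr0 (big_geq (leqnSn n.+1)).
have hT' : n.+1%:R / n%:R <= T.
  by apply: le_trans hT; apply: ler_wpM2r; rewrite ?invr_ge0 // ler_nat.
have := scdl_bins_ge_thresholds pi al n n T (n%:R / n%:R) pi0 (leqnn n) hT' (lexx _).
by rewrite (big_geq (leqnn n.+1)).
Qed.

Lemma natr_double_div (a b : nat) : a.*2%:R / b.*2%:R = a%:R / b%:R :> R.
Proof. by rewrite -!mul2n !natrM invfM mulrACA divff ?mul1r // pnatr_eq0. Qed.

Definition refines X X' (m : nat) :=
  forall j, (j <= m)%N -> X j = X' j.*2 + X' j.*2.+1 / 2 + left_odd X' j / 2.

Lemma sum_refine_le (f : R -> R -> R) pi al pi' al' m lo hi :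
  f 0 0 = 0 ->
  (forall a0 a1 a2 b0 b1 b2, f (a0 + a1 / 2 + a2 / 2) (b0 + b1 / 2 + b2 / 2) <=
                             f a0 b0 + f a1 b1 / 2 + f a2 b2 / 2) ->
  refines pi pi' m -> refines al al' m -> (lo <= hi <= m.+1)%N ->
  \sum_(lo <= j < hi) f (al j) (pi j) <=
  \sum_(lo.*2 <= k < hi.*2) f (al' k) (pi' k)
  + (left_odd (fun k => f (al' k) (pi' k)) lo
     - left_odd (fun k => f (al' k) (pi' k)) hi) / 2.
Proof.
move=> f00 f_mix hpi hal /andP[lohi him].
rewrite -(sum_refine (fun k => f (al' k) (pi' k))) //.
apply: ler_sum_nat => j /andP[_ jhi]; rewrite hpi ?hal; try lia.
have -> : left_odd (fun k => f (al' k) (pi' k)) j = f (left_odd al' j) (left_odd pi' j).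
  by case: j {jhi} => [|j] /=.
exact: f_mix.
Qed.

Lemma scdl_bins_refine pi al pi' al' m : (forall k, 0 <= pi' k) ->
  pi' m.*2.+1 = 0 -> al' m.*2.+1 = 0 -> refines pi pi' m -> refines al al' m ->
  scdl_bins pi al m <= scdl_bins pi' al' m.*2.
Proof.
move=> pi'0 pitop altop hpi hal.
apply: scdl_bins_le => [|i im]; first exact: scdl_bins_ge0.
set T : R := i.+1%:R / m%:R; set t : R := i%:R / m%:R.
have ler_grid (a b : nat) : (a <= b)%N -> a%:R / m.*2%:R <= b%:R / m.*2%:R :> R.
  by move=> ab; apply: ler_wpM2r; rewrite ?invr_ge0 // ler_nat.
have eT : T = i.*2.+2%:R / m.*2%:R by rewrite -doubleS natr_double_div.
have et : t = i.*2%:R / m.*2%:R by rewrite natr_double_div.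
have lower := @sum_refine_le (fun a b => excess a b T) _ _ _ _ _ 0 i.+1 (excess00 T)
  (fun _ _ _ _ _ _ => excess_mix_le _ _ _ _ _ _ T) hpi hal im.
have him : (i < m.+1 <= m.+1)%N by rewrite ltnS im /=.
have upper := @sum_refine_le (fun a b => shortfall a b t) _ _ _ _ _ i.+1 m.+1
  (shortfall00 t) (fun _ _ _ _ _ _ => shortfall_mix_le _ _ _ _ _ _ t) hpi hal him.
rewrite /= double0 doubleS (big_nat_recr i.*2.+1) //= in lower.
rewrite /= !doubleS pitop altop shortfall00 subr0 in upper.
have TA : i.*2.+1%:R / m.*2%:R <= T by rewrite eT; apply: ler_grid.
have TB : i.*2.+2%:R / m.*2%:R <= T by rewrite eT.
have tA : t <= i.*2%:R / m.*2%:R by rewrite et.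
have tB : t <= i.*2.+1%:R / m.*2%:R by rewrite et; apply: ler_grid.
have iA : (i.*2 <= m.*2.+1)%N by rewrite leqW // leq_double.
have iB : (i.*2.+1 <= m.*2.+1)%N by rewrite ltnS leq_double.
have A := scdl_bins_ge_thresholds_ext pi' al' m.*2 i.*2 T t pi'0 pitop altop iA TA tA.
have B := scdl_bins_ge_thresholds_ext pi' al' m.*2 i.*2.+1 T t pi'0 pitop altop iB TB tB.
rewrite (@big_ltn _ _ _ i.*2.+1) in A; last lia.
rewrite (big_nat_recr i.*2.+1) //= in B.
rewrite /scdl_term -/T -/t; lra.
Qed.

End Refinement.

Section BinWeights.
Context {R : realType}.
Implicit Types q : R.

Lemma natr_double n : n.*2%:R = 2 * n%:R :> R.
Proof. by rewrite -mul2n natrM. Qed.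

Lemma wbin_ge0 m j q : 0 <= wbin m j q.
Proof. exact: posp_ge0. Qed.

Lemma wbin_le1 m j q : wbin m j q <= 1.
Proof. exact: tent_le1. Qed.

Lemma wbin_refine m j q : 0 <= q ->
  wbin m j q = wbin m.*2 j.*2 q + wbin m.*2 j.*2.+1 q / 2
               + left_odd (fun k => wbin m.*2 k q) j / 2.
Proof.
move=> q0; rewrite !wbinE.
have := tent_half (m.*2%:R * q - j.*2%:R).
have -> : (m.*2%:R * q - j.*2%:R) / 2 = m%:R * q - j%:R :> R.
  by rewrite !natr_double; field.
have -> : m.*2%:R * q - j.*2%:R - 1 = m.*2%:R * q - j.*2.+1%:R :> R.
  by rewrite -natr1; ring.
move=> ->.
suff -> : tent (m.*2%:R * q - j.*2%:R + 1) = left_odd (fun k => wbin m.*2 k q) j.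
  by ring.
case: j => [|j] /=.
  by apply: tent_eq0; rewrite double0 subr0 ger0_norm ?lerDr ?addr_ge0 ?mulr_ge0.
by rewrite wbinE; congr tent; rewrite doubleS -(natr1 j.*2.+1) -natr1; ring.
Qed.

Lemma wbin_gt m j q : q <= 1 -> (m < j)%N -> wbin m j q = 0.
Proof.
move=> q1 mj; rewrite wbinE tent_eq0 //.
have : m%:R * q <= m%:R :> R by rewrite -[leRHS]mulr1 ler_wpM2l.
have : m.+1%:R <= j%:R :> R by rewrite ler_nat.
rewrite -natr1 => h1 h2; rewrite ler0_norm; lra.
Qed.

Lemma wbin_supp m j q : 0 <= q ->
  j != Num.truncn (m%:R * q) -> j != (Num.truncn (m%:R * q)).+1 -> wbin m j q = 0.
Proof.
move=> q0 h1 h2; set k := Num.truncn (m%:R * q) in h1 h2.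
have mq0 : 0 <= m%:R * q :> R by apply: mulr_ge0.
have /andP[k1 k2] := truncn_itv mq0; rewrite -/k -natr1 in k1 k2.
rewrite wbinE; apply: tent_eq0.
have [jk|jk] : (j.+1 <= k)%N \/ (k.+2 <= j)%N by move/eqP: h1; move/eqP: h2; lia.
  by move: jk; rewrite -(ler_nat R) -natr1 => jk; rewrite ger0_norm; lra.
by move: jk; rewrite -(ler_nat R) -!natr1 => jk; rewrite ler0_norm; lra.
Qed.

Lemma sum_if_eq_le (c n : nat) (A : R) : 0 <= A ->
  \sum_(0 <= j < n) (if j == c then A else 0) <= A.
Proof.
move=> A0; rewrite big_mkord -big_mkcond /= (big_ord1_eq _ (fun=> A)).
by case: ifP.
Qed.

Lemma sum_wbin_le1 m n q : 0 <= q -> \sum_(0 <= j < n) wbin m j q <= 1.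
Proof.
move=> q0; set k := Num.truncn (m%:R * q).
have mq0 : 0 <= m%:R * q :> R by apply: mulr_ge0.
have /andP[k1 k2] := truncn_itv mq0; rewrite -/k in k1 k2.
apply: le_trans (_ : _ <= \sum_(0 <= j < n) ((if j == k then wbin m k q else 0)
    + (if j == k.+1 then wbin m k.+1 q else 0))) _.
  apply: ler_sum => j _.
  case: (eqVneq j k) => [->|jk].
    by rewrite (_ : (k == k.+1) = false) ?addr0 //; lia.
  case: (eqVneq j k.+1) => [->|jk1]; first by rewrite add0r.
  by rewrite add0r (wbin_supp m j q q0 jk jk1).
rewrite big_split /=.
apply: le_trans (lerD (sum_if_eq_le _ _ _ (wbin_ge0 _ _ _))
                      (sum_if_eq_le _ _ _ (wbin_ge0 _ _ _))) _.
rewrite !wbinE /tent -natr1; rewrite -natr1 in k2.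
by rewrite_signs; lra.
Qed.

(* Each [q] meets at most two tents, so at most four terms survive. *)
Lemma sum_wbin_dist m n q q' : 0 <= q -> 0 <= q' ->
  \sum_(0 <= j < n) `|wbin m j q - wbin m j q'| <= 4 * (m%:R * `|q - q'|).
Proof.
move=> q0 q'0; set k := Num.truncn (m%:R * q); set k' := Num.truncn (m%:R * q').
set D := m%:R * `|q - q'|.
have D0 : 0 <= D by apply: mulr_ge0.
have hD j : `|wbin m j q - wbin m j q'| <= D.
  rewrite !wbinE; apply: le_trans (tent_lipschitz _ _) _.
  have -> : m%:R * q - j%:R - (m%:R * q' - j%:R) = m%:R * (q - q') by ring.
  by rewrite normrM ger0_norm.
apply: le_trans (_ : _ <= \sum_(0 <= j < n) ((if j == k then D else 0)
    + (if j == k.+1 then D else 0) + (if j == k' then D else 0)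
    + (if j == k'.+1 then D else 0))) _.
  apply: ler_sum => j _.
  have g c : 0 <= (if j == c then D else 0) by case: ifP.
  have := g k; have := g k.+1; have := g k'; have := g k'.+1.
  case: (eqVneq j k) => [->|jk]; first by have := hD k; lra.
  case: (eqVneq j k.+1) => [->|jk1]; first by have := hD k.+1; lra.
  case: (eqVneq j k') => [->|jk']; first by have := hD k'; lra.
  case: (eqVneq j k'.+1) => [->|jk'1]; first by have := hD k'.+1; lra.
  by rewrite (wbin_supp m j q q0 jk jk1) (wbin_supp m j q' q'0 jk' jk'1) subr0 normr0; lra.
rewrite !big_split /=.
have := sum_if_eq_le k n D D0; have := sum_if_eq_le k.+1 n D D0.
have := sum_if_eq_le k' n D D0; have := sum_if_eq_le k'.+1 n D D0.
lra.
Qed.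

End BinWeights.

Section BoundedMeasurable.
Context {R : realType} {d : measure_display} {Omega : measurableType d}.
Implicit Types f g : Omega -> R.

Definition bdd_measurable f :=
  measurable_fun setT f /\ exists M, forall x, `|f x| <= M.

Lemma bdd_measurable_cst c : bdd_measurable (fun=> c).
Proof. by split; [exact: measurable_cst | exists `|c|]. Qed.

Lemma bdd_measurableD {f g} :
  bdd_measurable f -> bdd_measurable g -> bdd_measurable (fun x => f x + g x).
Proof.
case=> mf [M hM] [mg [N hN]]; split; first exact: measurable_funD.
by exists (M + N) => x; apply: le_trans (ler_normD _ _) _; apply: lerD.
Qed.

Lemma bdd_measurableB {f g} :
  bdd_measurable f -> bdd_measurable g -> bdd_measurable (fun x => f x - g x).
Proof.
case=> mf [M hM] [mg [N hN]]; split; first exact: measurable_funB.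
by exists (M + N) => x; apply: le_trans (ler_normB _ _) _; apply: lerD.
Qed.

Lemma bdd_measurableM {f g} :
  bdd_measurable f -> bdd_measurable g -> bdd_measurable (fun x => f x * g x).
Proof.
case=> mf [M hM] [mg [N hN]]; split; first exact: measurable_funM.
by exists (M * N) => x; rewrite normrM; apply: ler_pM.
Qed.

Lemma bdd_measurable_norm {f} : bdd_measurable f -> bdd_measurable (fun x => `|f x|).
Proof.
case=> mf [M hM]; split; first by apply: measurableT_comp => //; exact: normr_measurable.
by exists M => x; rewrite normr_id.
Qed.

Lemma bdd_measurable_sum (F : nat -> Omega -> R) n :
  (forall j, bdd_measurable (F j)) -> bdd_measurable (fun x => \sum_(0 <= j < n) F j x).
Proof.
move=> hF; elim: n => [|n IH].
  by under eq_fun do rewrite big_geq //; exact: bdd_measurable_cst.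
by under eq_fun do rewrite big_nat_recr //; exact: bdd_measurableD.
Qed.

Lemma bdd_measurable_left_odd (F : nat -> Omega -> R) j :
  (forall k, bdd_measurable (F k)) -> bdd_measurable (fun x => left_odd (fun k => F k x) j).
Proof. by case: j => [|j] /= h; [exact: bdd_measurable_cst | exact: h]. Qed.

End BoundedMeasurable.

Section BoundedIntegrals.
Context {R : realType} {d : measure_display} {Omega : measurableType d}.
Variable P : probability Omega R.
Implicit Types f g : Omega -> R.

Lemma bdd_measurable_integrable {f} : bdd_measurable f -> P.-integrable setT (EFin \o f).
Proof.
case=> mf [M fM]; apply: measurable_bounded_integrable => //.
  by apply: (@le_lt_trans _ _ 1%E); [exact: probability_le1 | exact: ltey].
exists M; split; first exact: num_real.
by move=> M' hM' x _ /=; apply: le_trans (fM x) (ltW hM').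
Qed.

Lemma fine_probability_setT : fine (P setT) = 1 :> R.
Proof. by rewrite probability_setT. Qed.

Lemma Rintegral_cst1 c : Rintegral P setT (fun=> c) = c.
Proof. by rewrite Rintegral_cst // fine_probability_setT mulr1. Qed.

Lemma Rintegral_sum (F : nat -> Omega -> R) n : (forall j, bdd_measurable (F j)) ->
  Rintegral P setT (fun x => \sum_(0 <= j < n) F j x) =
  \sum_(0 <= j < n) Rintegral P setT (F j).
Proof.
move=> hF; elim: n => [|n IH].
  by under eq_fun do rewrite big_geq //; rewrite big_geq // Rintegral_cst1.
under eq_fun do rewrite big_nat_recr //.
rewrite RintegralD ?IH ?big_nat_recr //; apply: bdd_measurable_integrable => //.
exact: bdd_measurable_sum.
Qed.

Lemma Rintegral_mix f0 f1 f2 :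
  bdd_measurable f0 -> bdd_measurable f1 -> bdd_measurable f2 ->
  Rintegral P setT (fun x => f0 x + f1 x / 2 + f2 x / 2) =
  Rintegral P setT f0 + Rintegral P setT f1 / 2 + Rintegral P setT f2 / 2.
Proof.
move=> b0 b1 b2.
have b1' := bdd_measurableM b1 (bdd_measurable_cst 2^-1).
have b2' := bdd_measurableM b2 (bdd_measurable_cst 2^-1).
rewrite RintegralD //; last 2 first.
- exact/bdd_measurable_integrable/bdd_measurableD.
- exact: bdd_measurable_integrable.
rewrite RintegralD //; try exact: bdd_measurable_integrable.
by rewrite !RintegralZr //; exact: bdd_measurable_integrable.
Qed.

Lemma Rintegral_left_odd (F : nat -> Omega -> R) j :
  Rintegral P setT (fun x => left_odd (fun k => F k x) j) =
  left_odd (fun k => Rintegral P setT (F k)) j.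
Proof. by case: j => [|j] //=; rewrite Rintegral_cst1. Qed.

End BoundedIntegrals.

Lemma measurable_wbin {R : realType} m j : measurable_fun setT (wbin m j : R -> R).
Proof.
apply: measurable_maxr; last exact: measurable_cst.
apply: measurable_funB; first exact: measurable_cst.
apply: measurableT_comp; first exact: normr_measurable.
by apply: measurable_funB; [exact: mulrl_measurable | exact: measurable_cst].
Qed.

Lemma ratio_excess_shortfall {R : realType} (a b t : R) : 0 <= a <= b ->
  b * posp ((if b == 0 then 0 else a / b) - t) = excess a b t /\
  b * posp (t - (if b == 0 then 0 else a / b)) = shortfall a b t.
Proof.
move=> /andP[a0 ab]; have [b0|b0] := eqVneq b 0.
  have a00 : a = 0 by rewrite b0 in ab; lra.
  by rewrite b0 a00 !mul0r excess00 shortfall00.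
have bp : 0 < b by rewrite lt_def b0 (le_trans a0 ab).
rewrite /excess /shortfall -!pospMl ?ltW //.
by split; congr posp; field.
Qed.

Section OnePredictor.
Context {R : realType} {d : measure_display} {Omega : measurableType d}.
Variable P : probability Omega R.
Variables p y : Omega -> R.
Hypothesis mp : measurable_fun setT p.
Hypothesis my : measurable_fun setT y.
Hypothesis p01 : forall x, 0 <= p x <= 1.
Hypothesis y01 : forall x, y x = 0 \/ y x = 1.

(* [alpha_bin m j = pi_j * q_j], the unnormalised bin mean. *)
Definition alpha_bin m j := Rintegral P setT (fun x => wbin m j (p x) * y x).

Lemma bdd_measurable_wbin m j : bdd_measurable (fun x => wbin m j (p x)).
Proof.
split; first exact: measurableT_comp (measurable_wbin m j) mp.
by exists 1 => x; rewrite ger0_norm ?wbin_le1 ?wbin_ge0.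
Qed.

Lemma bdd_measurable_y : bdd_measurable y.
Proof. by split => //; exists 1 => x; case: (y01 x) => ->; rewrite ?normr0 ?normr1. Qed.

Lemma bdd_measurable_wbin_y m j : bdd_measurable (fun x => wbin m j (p x) * y x).
Proof. exact: bdd_measurableM (bdd_measurable_wbin m j) bdd_measurable_y. Qed.

Lemma pi_bin_ge0 m j : 0 <= pi_bin P p m j.
Proof. by apply: Rintegral_ge0 => x _; exact: wbin_ge0. Qed.

Lemma alpha_bin_ge0 m j : 0 <= alpha_bin m j.
Proof.
apply: Rintegral_ge0 => x _; rewrite mulr_ge0 ?wbin_ge0 //.
by case: (y01 x) => ->.
Qed.

Lemma alpha_bin_le_pi m j : alpha_bin m j <= pi_bin P p m j.
Proof.
apply: le_Rintegral => //; try exact: bdd_measurable_integrable (bdd_measurable_wbin_y _ _).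
  exact: bdd_measurable_integrable (bdd_measurable_wbin _ _).
move=> x _; rewrite -[leRHS]mulr1 ler_wpM2l ?wbin_ge0 //.
by case: (y01 x) => ->.
Qed.

Lemma SCDL_mE m : SCDL_m P p y m = scdl_bins (pi_bin P p m) (alpha_bin m) m.
Proof.
apply: eq_bigr => i _; rewrite /scdl_term big_mkord.
have h j : 0 <= alpha_bin m j <= pi_bin P p m j by rewrite alpha_bin_ge0 alpha_bin_le_pi.
congr (_ + _); apply: eq_bigr => j _.
  by have [-> _] := ratio_excess_shortfall _ _ (i.+1%:R / m%:R) (h j).
by have [_ ->] := ratio_excess_shortfall _ _ (i%:R / m%:R) (h j).
Qed.

Lemma sum_pi_bin_le1 m : \sum_(0 <= j < m.+1) pi_bin P p m j <= 1.
Proof.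
rewrite -(Rintegral_sum P (fun j x => wbin m j (p x))); last exact: bdd_measurable_wbin.
rewrite -(Rintegral_cst1 P 1); apply: le_Rintegral => //.
- exact/bdd_measurable_integrable/bdd_measurable_sum/bdd_measurable_wbin.
- exact/bdd_measurable_integrable/bdd_measurable_cst.
- by move=> x _; apply: sum_wbin_le1; have /andP[] := p01 x.
Qed.

Lemma pi_bin_refines m : refines (pi_bin P p m) (pi_bin P p m.*2) m.
Proof.
move=> j _; rewrite /pi_bin -(Rintegral_left_odd P (fun k x => wbin m.*2 k (p x))).
rewrite -Rintegral_mix; try exact: bdd_measurable_wbin.
  by apply: eq_Rintegral => x _; apply: wbin_refine; have /andP[] := p01 x.
exact: bdd_measurable_left_odd _ (fun k => bdd_measurable_wbin m.*2 k).
Qed.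

Lemma alpha_bin_refines m : refines (alpha_bin m) (alpha_bin m.*2) m.
Proof.
move=> j _; rewrite /alpha_bin -(Rintegral_left_odd P (fun k x => wbin m.*2 k (p x) * y x)).
rewrite -Rintegral_mix; try exact: bdd_measurable_wbin_y.
  apply: eq_Rintegral => x _; rewrite wbin_refine; last by have /andP[] := p01 x.
  by case: j => [|j] /=; ring.
exact: bdd_measurable_left_odd _ (fun k => bdd_measurable_wbin_y m.*2 k).
Qed.

Lemma pi_bin_gt m j : (m < j)%N -> pi_bin P p m j = 0.
Proof.
move=> mj; rewrite -(Rintegral_cst1 P 0); apply: eq_Rintegral => x _.
by apply: wbin_gt mj; have /andP[] := p01 x.
Qed.

Lemma alpha_bin_gt m j : (m < j)%N -> alpha_bin m j = 0.
Proof.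
move=> mj; rewrite -(Rintegral_cst1 P 0); apply: eq_Rintegral => x _.
by rewrite wbin_gt ?mul0r //; have /andP[] := p01 x.
Qed.

Lemma SCDL_m_ge0 m : 0 <= SCDL_m P p y m.
Proof. by rewrite SCDL_mE scdl_bins_ge0. Qed.

Lemma SCDL_m_le1 m : (0 < m)%N -> SCDL_m P p y m <= 1.
Proof.
move=> m0; rewrite SCDL_mE; apply: scdl_bins_le1 => //; last exact: sum_pi_bin_le1.
by move=> j; rewrite alpha_bin_ge0 alpha_bin_le_pi.
Qed.

Lemma SCDL_m_double m : SCDL_m P p y m <= SCDL_m P p y m.*2.
Proof.
rewrite !SCDL_mE; apply: scdl_bins_refine.
- exact: pi_bin_ge0.
- by rewrite pi_bin_gt.
- by rewrite alpha_bin_gt.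
- exact: pi_bin_refines.
- exact: alpha_bin_refines.
Qed.

End OnePredictor.

Definition dyadic k := (2 ^ k.+1)%N.

Lemma dyadic_gt0 k : (0 < dyadic k)%N.
Proof. by rewrite expn_gt0. Qed.

Lemma dyadicS k : dyadic k.+1 = (dyadic k).*2.
Proof. by rewrite /dyadic expnS mul2n. Qed.

Lemma leq_dyadic j k : (j <= k)%N -> (dyadic j <= dyadic k)%N.
Proof. by move=> jk; rewrite leq_exp2l. Qed.

Lemma dyadic_between {R : realType} (x : R) : 1 <= x ->
  exists k, x < (dyadic k)%:R /\ (dyadic k)%:R <= 2 * x.
Proof.
move=> x1; have x0 : 0 <= x by apply: le_trans x1.
have /andP[n1 n2] := truncn_itv x0; set n := Num.truncn x in n1 n2.
have n0 : (0 < n)%N by rewrite truncn_gt0.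
have /andP[b1 b2] := trunc_log_bounds (isT : (1 < 2)%N) n0.
exists (trunc_log 2 n); split.
  by apply: lt_le_trans n2 _; rewrite ler_nat.
rewrite /dyadic expnS natrM; apply: ler_pM => //; apply: le_trans _ n1; by rewrite ler_nat.
Qed.

Section DyadicInfimum.
Context {R : realType} {d : measure_display} {Omega : measurableType d}.
Variable P : probability Omega R.
Variables p y : Omega -> R.
Hypothesis mp : measurable_fun setT p.
Hypothesis my : measurable_fun setT y.
Hypothesis p01 : forall x, 0 <= p x <= 1.
Hypothesis y01 : forall x, y x = 0 \/ y x = 1.

Definition scdl_at k := Num.max (SCDL_m P p y (dyadic k)) (dyadic k)%:R^-1.

Lemma SCDLE : SCDL P p y = inf (range scdl_at).
Proof. by []. Qed.

Lemma SCDL_m_dyadic_mono j k : (j <= k)%N ->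
  SCDL_m P p y (dyadic j) <= SCDL_m P p y (dyadic k).
Proof.
move=> /subnKC <-; elim: (k - j)%N => [|n IH]; first by rewrite addn0.
by apply: le_trans IH _; rewrite addnS dyadicS; exact: SCDL_m_double.
Qed.

Lemma scdl_at_ge0 k : 0 <= scdl_at k.
Proof. by rewrite le_max SCDL_m_ge0. Qed.

Lemma scdl_at_le1 k : scdl_at k <= 1.
Proof.
rewrite ge_max SCDL_m_le1 ?dyadic_gt0 // invf_le1 ?ltr0n ?dyadic_gt0 //.
by rewrite ler1n dyadic_gt0.
Qed.

Lemma has_inf_scdl_at : has_inf (range scdl_at).
Proof.
split; first by exists (scdl_at 0), 0.
by exists 0 => _ [k _ <-]; exact: scdl_at_ge0.
Qed.

Lemma SCDL_le_scdl_at k : SCDL P p y <= scdl_at k.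
Proof. by rewrite SCDLE; apply: ge_inf; [case: has_inf_scdl_at | exists k]. Qed.

Lemma SCDL_ge0 : 0 <= SCDL P p y.
Proof.
rewrite SCDLE; apply: lb_le_inf; first by exists (scdl_at 0), 0.
by move=> _ [k _ <-]; exact: scdl_at_ge0.
Qed.

Lemma SCDL_le1 : SCDL P p y <= 1.
Proof. exact: le_trans (SCDL_le_scdl_at 0) (scdl_at_le1 0). Qed.

Lemma SCDL_approx e : 0 < e -> exists k, scdl_at k < SCDL P p y + e.
Proof. by move=> e0; have [_ [k _ <-] h] := inf_adherent e0 has_inf_scdl_at; exists k. Qed.

End DyadicInfimum.

Section SquareBounds.
Context {R : realType}.

(* Take [t = max s2 (sqrt E)]; then [E / t <= t], and [t = 0] forces [E = 0]. *)
Lemma sqr_le_of_tradeoff (s1 s2 c E : R) :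
  0 <= s1 -> 0 <= s2 -> 0 <= c -> 0 <= E ->
  (forall t, 0 < t -> s2 <= t -> s1 <= t + c * E / t) ->
  s1 ^+ 2 <= s2 ^+ 2 + (1 + c) ^+ 2 * E.
Proof.
move=> s10 s20 c0 E0 tradeoff.
have r0 := sqrtr_ge0 E; have rr := sqr_sqrtr E0.
set t0 := Num.max s2 (Num.sqrt E).
have s2t0 : s2 <= t0 by rewrite le_max lexx.
have rt0 : Num.sqrt E <= t0 by rewrite le_max lexx orbT.
have t0sq : t0 ^+ 2 <= s2 ^+ 2 + E.
  rewrite /t0 /Num.max; case: ltP => _; first by rewrite rr lerDr sqr_ge0.
  by rewrite lerDl.
have [t0le0|t0p] := lerP t0 0.
  have E00 : E = 0 by rewrite -rr (_ : Num.sqrt E = 0) ?expr0n //; lra.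
  have s100 : s1 <= 0.
    apply/ler_addgt0Pr => e e0; rewrite add0r.
    have := tradeoff e e0 (ltW (le_lt_trans (le_trans s2t0 t0le0) e0)).
    by rewrite E00 mulr0 mul0r addr0.
  have -> : s1 = 0 by lra.
  rewrite expr2 mul0r; apply: addr_ge0; [exact: sqr_ge0 | apply: mulr_ge0 => //; exact: sqr_ge0].
have := tradeoff t0 t0p s2t0; rewrite -mulrA; set q := E / t0 => hs1.
have q0 : 0 <= q by rewrite divr_ge0 // ltW.
have t0q : t0 * q = E by rewrite /q mulrC divfK // gt_eqF.
have qt0 : q <= t0 by rewrite /q ler_pdivrMr // -expr2 -rr ler_pXn2r // ?nnegrE // ltW.
have hs1sq : s1 * s1 <= (t0 + c * q) * (t0 + c * q) by apply: ler_pM.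
have qq : c * c * (q * q) <= c * c * E.
  by rewrite -t0q; apply: ler_wpM2l; [exact: mulr_ge0 | exact: ler_wpM2r].
rewrite !expr2 in t0sq *; nra.
Qed.

Lemma sqr_dist_bounds (a b c E : R) : 0 <= a -> 0 <= b -> 0 <= c -> 0 <= E ->
  a ^+ 2 <= b ^+ 2 + c ^+ 2 * E -> b ^+ 2 <= a ^+ 2 + c ^+ 2 * E ->
  `|a ^+ 2 - b ^+ 2| <= c ^+ 2 * E /\ `|a - b| <= c * Num.sqrt E.
Proof.
move=> a0 b0 c0 E0 hab hba.
have hsq : `|a ^+ 2 - b ^+ 2| <= c ^+ 2 * E by rewrite ler_distl lerBlDr hab hba.
split=> //; rewrite -(ler_pXn2r (isT : (0 < 2)%N)) ?nnegrE ?mulr_ge0 ?sqrtr_ge0 //.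
rewrite exprMn sqr_sqrtr //; apply: le_trans hsq.
have ab : `|a - b| <= a + b by rewrite ler_norml; apply/andP; split; lra.
by rewrite subr_sqr normrM [`|a + b|]ger0_norm ?addr_ge0 // expr2 ler_wpM2l.
Qed.

End SquareBounds.

Section TwoPredictors.
Context {R : realType} {d : measure_display} {Omega : measurableType d}.
Variable P : probability Omega R.
Variables p1 p2 y : Omega -> R.
Hypothesis mp1 : measurable_fun setT p1.
Hypothesis mp2 : measurable_fun setT p2.
Hypothesis my : measurable_fun setT y.
Hypothesis p01_1 : forall x, 0 <= p1 x <= 1.
Hypothesis p01_2 : forall x, 0 <= p2 x <= 1.
Hypothesis y01 : forall x, y x = 0 \/ y x = 1.

Let E := Rintegral P setT (fun x => `|p1 x - p2 x|).
Let dw m j x := `|wbin m j (p1 x) - wbin m j (p2 x)|.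

Lemma bdd_measurable_dw m j : bdd_measurable (dw m j).
Proof.
apply/bdd_measurable_norm/bdd_measurableB.
  exact: bdd_measurable_wbin p1 mp1 m j.
exact: bdd_measurable_wbin p2 mp2 m j.
Qed.

Lemma dist_pi_bin_le m j :
  `|pi_bin P p1 m j - pi_bin P p2 m j| <= Rintegral P setT (dw m j).
Proof.
have b1 := bdd_measurable_wbin p1 mp1 m j.
have b2 := bdd_measurable_wbin p2 mp2 m j.
rewrite /pi_bin -RintegralB //; try exact: bdd_measurable_integrable.
apply: le_normr_Rintegral => //.
exact/bdd_measurable_integrable/bdd_measurableB.
Qed.

Lemma dist_alpha_bin_le m j :
  `|alpha_bin P p1 y m j - alpha_bin P p2 y m j| <= Rintegral P setT (dw m j).
Proof.
have b1 := bdd_measurable_wbin_y p1 y mp1 my y01 m j.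
have b2 := bdd_measurable_wbin_y p2 y mp2 my y01 m j.
rewrite /alpha_bin -RintegralB //; try exact: bdd_measurable_integrable.
apply: le_trans (le_normr_Rintegral _ _) _ => //.
  exact/bdd_measurable_integrable/bdd_measurableB.
apply: le_Rintegral => //.
- exact/bdd_measurable_integrable/bdd_measurable_norm/bdd_measurableB.
- exact/bdd_measurable_integrable/bdd_measurable_dw.
move=> x _; rewrite -mulrBl normrM -[leRHS]mulr1 ler_wpM2l //.
by case: (y01 x) => ->; rewrite ?normr0 ?normr1.
Qed.

Lemma sum_dist_bins_le m :
  \sum_(0 <= j < m.+1) (`|alpha_bin P p1 y m j - alpha_bin P p2 y m j|
                        + 2 * `|pi_bin P p1 m j - pi_bin P p2 m j|)
  <= 12 * m%:R * E.
Proof.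
have bdp : bdd_measurable (fun x => `|p1 x - p2 x|).
  apply/bdd_measurable_norm/bdd_measurableB; split => //; exists 1 => x.
    by have /andP[? ?] := p01_1 x; rewrite ger0_norm.
  by have /andP[? ?] := p01_2 x; rewrite ger0_norm.
apply: le_trans (_ : _ <= 3 * \sum_(0 <= j < m.+1) Rintegral P setT (dw m j)) _.
  rewrite mulr_sumr; apply: ler_sum_nat => j _.
  by have := dist_alpha_bin_le m j; have := dist_pi_bin_le m j; lra.
rewrite -Rintegral_sum; last exact: bdd_measurable_dw.
rewrite (_ : 12 * m%:R * E = 3 * (4 * m%:R * E)) ?ler_wpM2l //; last by ring.
have bmp := bdd_measurableM (bdd_measurable_cst m%:R) bdp.
rewrite /E -mulrA -(RintegralZl _ _ (bdd_measurable_integrable P bdp)) //.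
rewrite -(RintegralZl _ _ (bdd_measurable_integrable P bmp)) //.
apply: le_Rintegral => //.
- exact/bdd_measurable_integrable/bdd_measurable_sum/bdd_measurable_dw.
- exact: bdd_measurable_integrable (bdd_measurableM (bdd_measurable_cst _) bmp).
move=> x _; apply: sum_wbin_dist.
  by have /andP[] := p01_1 x.
by have /andP[] := p01_2 x.
Qed.

Lemma SCDL_m_lipschitz m : (0 < m)%N ->
  SCDL_m P p1 y m <= SCDL_m P p2 y m + 24 * m%:R * E.
Proof.
move=> m0; rewrite (SCDL_mE P p1 y mp1 my y01) (SCDL_mE P p2 y mp2 my y01).
apply: le_trans (scdl_bins_lipschitz _ _ (pi_bin P p2 m) (alpha_bin P p2 y m) _ m0) _.
rewrite lerD2l (_ : 24 * m%:R * E = 2 * (12 * m%:R * E)); last by ring.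
by rewrite ler_wpM2l // sum_dist_bins_le.
Qed.

(* Compare on the coarser of grid [j] and a near-optimal grid [k] for [p2]. *)
Lemma SCDL_le_dyadic j :
  SCDL P p1 y <= Num.max (SCDL P p2 y) (dyadic j)%:R^-1 + 24 * (dyadic j)%:R * E.
Proof.
have E0 : 0 <= E by apply: Rintegral_ge0.
apply/ler_addgt0Pr => e e0.
have [k hk] := SCDL_approx P p2 y mp2 my y01 _ e0.
set n := minn j k.
have s2max : SCDL P p2 y <= Num.max (SCDL P p2 y) (dyadic j)%:R^-1 by rewrite le_max lexx.
have Mjmax : (dyadic j)%:R^-1 <= Num.max (SCDL P p2 y) (dyadic j)%:R^-1 by rewrite le_max lexx orbT.
have [atk1 atk2] : SCDL_m P p2 y (dyadic k) <= scdl_at P p2 y k /\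
    (dyadic k)%:R^-1 <= scdl_at P p2 y k by split; rewrite /scdl_at le_max lexx ?orbT.
have lip := SCDL_m_lipschitz _ (dyadic_gt0 n).
have mono := SCDL_m_dyadic_mono P p2 y mp2 my p01_2 y01 _ _ (geq_minr j k).
have Mn : 24 * (dyadic n)%:R * E <= 24 * (dyadic j)%:R * E.
  by rewrite ler_wpM2r // ler_wpM2l // ler_nat leq_dyadic // geq_minl.
have inv : (dyadic n)%:R^-1 <= Num.max (SCDL P p2 y) (dyadic j)%:R^-1 + e.
  have [->|->] : n = j \/ n = k by rewrite /n; case: leqP; [left|right].
    by apply: le_trans Mjmax _; rewrite lerDl ltW.
  by apply: le_trans atk2 _; apply: le_trans (ltW hk) _; rewrite lerD2r.
apply: le_trans (SCDL_le_scdl_at P p1 y mp1 my y01 n) _.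
have ME0 : 0 <= 24 * (dyadic j)%:R * E by rewrite !mulr_ge0.
rewrite ge_max; apply/andP; split; lra.
Qed.

Lemma SCDL_tradeoff t : 0 < t -> SCDL P p2 y <= t -> SCDL P p1 y <= t + 48 * E / t.
Proof.
move=> t0 s2t; have E0 : 0 <= E by apply: Rintegral_ge0.
have Et0 : 0 <= 48 * E / t by rewrite divr_ge0 ?mulr_ge0 // ltW.
have [t1|t1] := lerP t 1; last first.
  apply: le_trans (SCDL_le1 P p1 y mp1 my p01_1 y01) _.
  by apply: le_trans (ltW t1) _; rewrite lerDl.
have it1 : 1 <= t^-1 by rewrite invf_ge1.
have [j [tMj Mjt]] := dyadic_between _ it1.
apply: le_trans (SCDL_le_dyadic j) _; apply: lerD.
  by rewrite ge_max s2t /= invf_ple ?posrE ?ltr0n ?dyadic_gt0 // ltW.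
rewrite (_ : 48 * E / t = 24 * (2 * t^-1) * E); last by field; rewrite gt_eqF.
by rewrite ler_wpM2r // ler_wpM2l.
Qed.

Lemma SCDL_sqr_le : SCDL P p1 y ^+ 2 <= SCDL P p2 y ^+ 2 + 49 ^+ 2 * E.
Proof.
rewrite (_ : 49 = 1 + 48) //; apply: sqr_le_of_tradeoff => //.
- exact: SCDL_ge0 P p1 y mp1 my y01.
- exact: SCDL_ge0 P p2 y mp2 my y01.
- exact: Rintegral_ge0.
- exact: SCDL_tradeoff.
Qed.

End TwoPredictors.

Theorem theorem5p1 :
  exists C : nat, (0 < C)%N /\
  forall (R : realType) (d : measure_display) (Omega : measurableType d)
    (P : probability Omega R) (p1 p2 y : Omega -> R),
    measurable_fun setT p1 -> measurable_fun setT p2 -> measurable_fun setT y ->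
    (forall x, 0 <= p1 x <= 1) -> (forall x, 0 <= p2 x <= 1) ->
    (forall x, y x = 0 \/ y x = 1) ->
    let E := Rintegral P setT (fun x => `|p1 x - p2 x|) in
    `|SCDL P p1 y ^+ 2 - SCDL P p2 y ^+ 2| <= C%:R * E /\
    `|SCDL P p1 y - SCDL P p2 y| <= C%:R * Num.sqrt E.
Proof.
exists 2401%N; split => // R d Omega P p1 p2 y mp1 mp2 my p01_1 p01_2 y01 E.
have E0 : 0 <= E by apply: Rintegral_ge0.
have h12 := SCDL_sqr_le P p1 p2 y mp1 mp2 my p01_1 p01_2 y01.
have h21 := SCDL_sqr_le P p2 p1 y mp2 mp1 my p01_2 p01_1 y01.
have E21 : Rintegral P setT (fun x => `|p2 x - p1 x|) = E.
  by apply: eq_Rintegral => x _; rewrite distrC.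
rewrite E21 in h21.
have [hsq hdist] := sqr_dist_bounds (SCDL P p1 y) (SCDL P p2 y) 49 E
  (SCDL_ge0 P p1 y mp1 my y01) (SCDL_ge0 P p2 y mp2 my y01) (ler0n _ 49) E0 h12 h21.
split; [apply: le_trans hsq _ | apply: le_trans hdist _].
  by rewrite ler_wpM2r // expr2 -natrM ler_nat.
by rewrite ler_wpM2r ?sqrtr_ge0 // ler_nat.
Qed.
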